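(* Let $k\ge4$ be an integer. In each of the cases (C1) $\eta\in[\pi/k,\eta_k)$ and $j\in\{k+1,\dots,2k-3\}$, and (C2) $\eta\in[\eta_{k+1},\pi/k)$ and $j\in\{k+1,\dots,2k-1\}$, we have $z_j\in\mathrm{co}(\{0,z_{j-1},w_1,1\})$ and $w_j\in\mathrm{co}(\{1,w_{j-1},b_0,a\})$.
   Context: For $\eta\in(0,\pi/3)$ let $a=\frac{e^{-i\eta}}{2\cos\eta}$, $c=\frac{1}{1-|a|^4}$, and for integers $j\ge0$ put $z_j=ca^{j+1}$, $w_j=1-c|a|^2a^j$, $b_0=a+c|a|^4$. For integers $k\ge1$ let $\Phi_k(\eta)=(1-|a|^4)\sin((k-1)\eta)-|a|^3\sin((k-2)\eta)+|a|^k\sin\eta$; for each $k\ge4$, $\Phi_k$ has a unique zero in $(\pi/k,\pi/(k-1))$, denoted $\eta_k$. $\mathrm{co}$ denotes convex hull. *)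

From Stdlib Require Import Reals.
From Coquelicot Require Import Coquelicot.
Open Scope R_scope.

(* a = e^{-i eta} / (2 cos eta), with e^{-i eta} = cos eta - i sin eta *)
Definition a_ (eta : R) : C :=
  Cdiv (cos eta, - sin eta) (RtoC (2 * cos eta)).

Definition c_ (eta : R) : R := 1 / (1 - (Cmod (a_ eta)) ^ 4).

Definition z_ (eta : R) (j : nat) : C :=
  Cmult (RtoC (c_ eta)) (Cpow (a_ eta) (j + 1)).

Definition w_ (eta : R) (j : nat) : C :=
  Cminus (RtoC 1) (Cmult (RtoC (c_ eta * (Cmod (a_ eta)) ^ 2)) (Cpow (a_ eta) j)).

Definition b0_ (eta : R) : C :=
  Cplus (a_ eta) (RtoC (c_ eta * (Cmod (a_ eta)) ^ 4)).

Definition Phi (k : nat) (eta : R) : R :=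
  (1 - (Cmod (a_ eta)) ^ 4) * sin ((INR k - 1) * eta)
  - (Cmod (a_ eta)) ^ 3 * sin ((INR k - 2) * eta)
  + (Cmod (a_ eta)) ^ k * sin eta.

Definition in_co4 (z p1 p2 p3 p4 : C) : Prop :=
  exists t1 t2 t3 t4 : R,
    0 <= t1 /\ 0 <= t2 /\ 0 <= t3 /\ 0 <= t4 /\ t1 + t2 + t3 + t4 = 1 /\
    z = Cplus (Cplus (Cplus (Cmult (RtoC t1) p1) (Cmult (RtoC t2) p2))
                     (Cmult (RtoC t3) p3)) (Cmult (RtoC t4) p4).

From Stdlib Require Import Reals Lra Lia Psatz.
From Coquelicot Require Import Coquelicot.
Open Scope R_scope.

(* Write a = s e^{-i eta} with s = |a| = 1 / (2 cos eta).  As Re a = 1/2, the affine map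
   u |-> 1 - conj(a) u sends 0, z_(j-1), z_j, w_1, 1 to 1, w_(j-1), w_j, b_0, a, so the claim on
   w_j follows from the claim on z_j.  With r = c s^j, z_(j-1) = r e^{-i j eta} and
   z_j = r s e^{-i (j+1) eta}; z_j lies in one of the triangles (0, z_(j-1), w_1),
   (0, z_(j-1), 1), (0, w_1, 1), which is decided by the signs of cross products.  These are
   positive multiples of sines and of Psi(x) = (1 - s^4) sin x - s^3 sin (x - eta), where
   Phi_n(eta) = Psi((n-1) eta) + s^n sin eta and Psi <= -s^5 sin eta on [pi, 2 pi - eta] once
   eta <= pi/4.  Two boundary cases need more: for j = k + 1 in (C2), Phi_(k+1) is decreasing on
   [pi/(k+1), pi/k] (a derivative estimate), so Phi_(k+1)(eta) <= Phi_(k+1)(eta_(k+1)) = 0;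
   for k = 4 in (C1), Phi_4(eta_4) = 0 means |a(eta_4)|^4 = 1/2, and the only index j = 5 reduces
   to polynomial inequalities in s^2. *)

Lemma pow_le_pow_of_le_1 (x : R) (m n : nat) :
  0 <= x <= 1 -> (m <= n)%nat -> x ^ n <= x ^ m.
Proof.
  intros Hx Hmn. replace n with (m + (n - m))%nat by lia. rewrite pow_add.
  assert (0 <= x ^ m) by (apply pow_le; lra).
  assert (x ^ (n - m) <= 1) by (rewrite <- (pow1 (n - m)); apply pow_incr; lra).
  assert (0 <= x ^ (n - m)) by (apply pow_le; lra). nra.
Qed.

Lemma cos_PI4_bounds : 7 / 10 <= cos (PI / 4) /\ cos (PI / 4) ^ 2 = 1 / 2.
Proof.
  rewrite cos_PI4. assert (H2 := Rlt_sqrt2_0). assert (E := sqrt_sqrt 2 ltac:(lra)).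
  split.
  - apply (Rmult_le_reg_r (sqrt 2)); [lra |]. field_simplify; [nra | lra].
  - replace ((1 / sqrt 2) ^ 2) with (/ (sqrt 2 * sqrt 2)) by (field; lra).
    rewrite E. field.
Qed.

Lemma cos_quarter_bounds (t : R) : 0 <= t <= PI / 4 -> 7 / 10 <= cos t /\ 1 / 2 <= cos t ^ 2.
Proof.
  intros Ht. assert (HPI := PI_RGT_0). destruct cos_PI4_bounds as [H1 H2].
  assert (cos (PI / 4) <= cos t) by (apply cos_decr_1; lra).
  split; nra.
Qed.

Lemma sin_ge_sin_mid (t b : R) : 0 < t <= PI / 2 -> t <= b <= PI - t -> sin t <= sin b.
Proof.
  intros Ht Hb. destruct (Rle_dec b (PI / 2)).
  - apply sin_incr_1; lra.
  - rewrite <- (sin_PI_x b). apply sin_incr_1; lra.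
Qed.

Lemma sin_le_neg_sin (t y : R) : 0 < t <= PI / 2 -> PI + t <= y <= 2 * PI - t -> sin y <= - sin t.
Proof.
  intros Ht Hy. replace y with (y - PI + PI) by ring. rewrite neg_sin.
  assert (sin t <= sin (y - PI)) by (apply sin_ge_sin_mid; lra). lra.
Qed.

Lemma sin_le_add_sin_sub (a t : R) : 0 <= a <= t -> t <= PI -> sin t <= sin a + sin (t - a).
Proof.
  intros Ha Ht. replace t with (a + (t - a)) at 1 by ring. rewrite sin_plus.
  assert (0 <= sin a) by (apply sin_ge_0; lra).
  assert (0 <= sin (t - a)) by (apply sin_ge_0; lra).
  assert (C1 := COS_bound (t - a)). assert (C2 := COS_bound a). nra.
Qed.

Definition cross (u v : C) : R := fst u * snd v - snd u * fst v.

Definition in_triangle0 (p u v : C) : Prop :=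
  exists l m : R, 0 <= l /\ 0 <= m /\ l + m <= 1 /\
    p = Cplus (Cmult (RtoC l) u) (Cmult (RtoC m) v).

Lemma in_triangle0_of_cross (p u v : C) :
  cross u v < 0 -> cross p v <= 0 -> cross u p <= 0 ->
  cross u v <= cross p v + cross u p -> in_triangle0 p u v.
Proof.
  intros Huv Hpv Hup Hedge.
  set (l := cross p v / cross u v). set (m := cross u p / cross u v).
  assert (El : l * cross u v = cross p v) by (unfold l; field; lra).
  assert (Em : m * cross u v = cross u p) by (unfold m; field; lra).
  exists l, m. split; [nra | split; [nra | split; [nra |]]].
  destruct p as [px py], u as [ux uy], v as [vx vy].
  unfold l, m, cross in *; cbn [fst snd] in *.
  apply injective_projections; cbn; field; lra.
Qed.

Lemma in_co4_of_triangle0 (z q1 q2 q3 : C) :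
  in_triangle0 z q1 q2 \/ in_triangle0 z q1 q3 \/ in_triangle0 z q2 q3 ->
  in_co4 z (RtoC 0) q1 q2 q3.
Proof.
  intros [(l & m & Hl & Hm & Hlm & ->) |
          [(l & m & Hl & Hm & Hlm & ->) | (l & m & Hl & Hm & Hlm & ->)]].
  - exists (1 - l - m), l, m, 0. repeat split; try lra. ring.
  - exists (1 - l - m), l, 0, m. repeat split; try lra. ring.
  - exists (1 - l - m), 0, l, m. repeat split; try lra. ring.
Qed.

Lemma in_co4_affine (al q z p1 p2 p3 p4 : C) :
  in_co4 z p1 p2 p3 p4 ->
  in_co4 (Cminus al (Cmult q z)) (Cminus al (Cmult q p1)) (Cminus al (Cmult q p2))
         (Cminus al (Cmult q p3)) (Cminus al (Cmult q p4)).
Proof.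
  intros (t1 & t2 & t3 & t4 & H1 & H2 & H3 & H4 & Hsum & ->).
  exists t1, t2, t3, t4. repeat split; auto.
  replace (RtoC t4) with (Cminus 1 (Cplus (Cplus t1 t2) t3))
    by (rewrite <- !RtoC_plus, <- RtoC_minus; f_equal; lra).
  ring.
Qed.

Definition polar (r x : R) : C := (r * cos x, - (r * sin x)).

Lemma cross_polar (r x r' y : R) : cross (polar r x) (polar r' y) = r * r' * sin (x - y).
Proof. unfold cross, polar; cbn. rewrite sin_minus. ring. Qed.

Lemma cross_polar_one (r x : R) : cross (polar r x) (RtoC 1) = r * sin x.
Proof. unfold cross, polar; cbn. ring. Qed.

Lemma cross_polar_one_sub_polar (r x r' y : R) :
  cross (polar r x) (Cminus 1 (polar r' y)) = r * sin x - r * r' * sin (x - y).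
Proof. unfold cross, polar; cbn. rewrite sin_minus. ring. Qed.

Lemma cross_one_sub_polar_one (r y : R) :
  cross (Cminus 1 (polar r y)) (RtoC 1) = - (r * sin y).
Proof. unfold cross, polar; cbn. ring. Qed.

Lemma cross_anti (u v : C) : cross u v = - cross v u.
Proof. unfold cross. ring. Qed.

Definition amod (eta : R) : R := / (2 * cos eta).

Lemma amod_pos (eta : R) : 0 < cos eta -> 0 < amod eta.
Proof. intros H. apply Rinv_0_lt_compat. lra. Qed.

Lemma amod_mul_cos (eta : R) : 0 < cos eta -> 2 * amod eta * cos eta = 1.
Proof. intros H. unfold amod. field. lra. Qed.

Lemma amod_sq_le_half (eta : R) : 0 <= eta <= PI / 4 -> amod eta ^ 2 <= 1 / 2.
Proof.
  intros H. destruct (cos_quarter_bounds eta H) as [H1 H2].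
  assert (E := amod_mul_cos eta ltac:(lra)). nra.
Qed.

Lemma amod_sq_ge_half (eta : R) : PI / 4 <= eta < PI / 2 -> 1 / 2 <= amod eta ^ 2.
Proof.
  intros H. assert (HPI := PI_RGT_0). destruct cos_PI4_bounds as [_ E].
  assert (0 < cos eta) by (apply cos_gt_0; lra).
  assert (cos eta <= cos (PI / 4)) by (apply cos_decr_1; lra).
  assert (cos eta ^ 2 <= 1 / 2) by nra.
  assert (amod eta ^ 2 * (4 * cos eta ^ 2) = 1)
    by (transitivity ((2 * amod eta * cos eta) ^ 2); [ring | rewrite amod_mul_cos by lra; ring]).
  nra.
Qed.

Lemma amod_lt (x y : R) : 0 <= x -> x < y -> y < PI / 2 -> amod x < amod y.
Proof.
  intros Hx Hxy Hy. assert (HPI := PI_RGT_0).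
  assert (cos y < cos x) by (apply cos_decreasing_1; lra).
  assert (0 < cos y) by (apply cos_gt_0; lra).
  apply Rinv_lt_contravar; nra.
Qed.

Lemma a_polar (eta : R) : 0 < cos eta -> a_ eta = polar (amod eta) eta.
Proof.
  intros H. unfold a_, polar, amod, Cdiv, Cinv, Cmult, RtoC; cbn.
  f_equal; field; lra.
Qed.

Lemma Cmod_a (eta : R) : 0 < cos eta -> Cmod (a_ eta) = amod eta.
Proof.
  intros H. rewrite a_polar by exact H. unfold Cmod, polar; cbn [fst snd].
  replace ((amod eta * cos eta) ^ 2 + (- (amod eta * sin eta)) ^ 2) with (amod eta ^ 2)
    by (rewrite <- (Rmult_1_r (amod eta ^ 2)) at 1; rewrite <- (sin2_cos2 eta);
        unfold Rsqr; ring).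
  apply sqrt_pow2. left. apply amod_pos, H.
Qed.

Lemma Cpow_a (eta : R) (n : nat) :
  0 < cos eta -> Cpow (a_ eta) n = polar (amod eta ^ n) (INR n * eta).
Proof.
  intros H. induction n as [| n IH].
  - unfold polar. rewrite Rmult_0_l, cos_0, sin_0. apply injective_projections; cbn; ring.
  - rewrite Cpow_S, IH, a_polar, S_INR by exact H.
    replace ((INR n + 1) * eta) with (eta + INR n * eta) by ring.
    unfold polar, Cmult; rewrite cos_plus, sin_plus; cbn. f_equal; ring.
Qed.

Lemma RtoC_mult_polar (c r x : R) : Cmult (RtoC c) (polar r x) = polar (c * r) x.
Proof. unfold polar, Cmult, RtoC; cbn. f_equal; ring. Qed.

Lemma a_add_conj (eta : R) : 0 < cos eta -> Cplus (a_ eta) (Cconj (a_ eta)) = 1.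
Proof.
  intros H. rewrite a_polar by exact H. unfold polar, amod, Cconj, Cplus, RtoC; cbn.
  f_equal; field; lra.
Qed.

Lemma w_conj_z (eta : R) (j : nat) :
  w_ eta j = Cminus 1 (Cmult (Cconj (a_ eta)) (z_ eta j)).
Proof.
  unfold w_, z_. rewrite RtoC_mult, Cmod2_conj, Nat.add_1_r, Cpow_S. ring.
Qed.

Lemma b0_conj_w1 (eta : R) :
  0 < cos eta -> b0_ eta = Cminus 1 (Cmult (Cconj (a_ eta)) (w_ eta 1)).
Proof.
  intros H. unfold b0_, w_. rewrite Cpow_1_r.
  replace (Cmod (a_ eta) ^ 4) with (Cmod (a_ eta) ^ 2 * Cmod (a_ eta) ^ 2) by ring.
  rewrite !RtoC_mult, Cmod2_conj. rewrite <- (a_add_conj eta H) at 1. ring.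
Qed.

Definition z_in_hull (eta : R) (j : nat) : Prop :=
  in_co4 (z_ eta j) (RtoC 0) (z_ eta (j - 1)) (w_ eta 1) (RtoC 1).

Lemma w_in_hull_of_z_in_hull (eta : R) (j : nat) : 0 < cos eta -> z_in_hull eta j ->
  in_co4 (w_ eta j) (RtoC 1) (w_ eta (j - 1)) (b0_ eta) (a_ eta).
Proof.
  intros H Hz.
  assert (Hw := in_co4_affine 1 (Cconj (a_ eta)) _ _ _ _ _ Hz).
  rewrite <- !w_conj_z, <- b0_conj_w1 in Hw by exact H.
  replace (Cminus 1 (Cmult (Cconj (a_ eta)) 0)) with (RtoC 1) in Hw by ring.
  replace (Cminus 1 (Cmult (Cconj (a_ eta)) 1)) with (a_ eta) in Hw
    by (rewrite <- (a_add_conj eta H) at 1; ring).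
  exact Hw.
Qed.

(* Up to a positive factor, the cross product of [r e^{-ix}] with [w_1]. *)
Definition Psi (eta x : R) : R :=
  (1 - amod eta ^ 4) * sin x - amod eta ^ 3 * sin (x - eta).

Lemma Phi_Psi (n : nat) (eta : R) : 0 < cos eta ->
  Phi n eta = Psi eta ((INR n - 1) * eta) + amod eta ^ n * sin eta.
Proof.
  intros H. unfold Phi, Psi. rewrite Cmod_a by exact H.
  replace ((INR n - 1) * eta - eta) with ((INR n - 2) * eta) by ring. ring.
Qed.

(* [amod eta ^ (n - 1) * sin (n * eta) = sin eta * sin_poly (amod eta ^ 2) n]: these are
   rescaled Chebyshev polynomials of the second kind. *)
Fixpoint sin_poly (t : R) (n : nat) : R :=
  match n with
  | O => 0
  | S m =>
      match m with
      | O => 1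
      | S p => sin_poly t m - t * sin_poly t p
      end
  end.

Lemma z5_polynomial_signs (t : R) : 1 / 2 <= t -> t ^ 2 < 1 / 2 ->
  1 - 3 * t - t ^ 2 + 5 * t ^ 3 - t ^ 4 < 0 /\ 1 - 2 * t - 2 * t ^ 2 + 3 * t ^ 3 + t ^ 4 <= 0 /\
  1 - 4 * t + 3 * t ^ 2 <= 0 /\ 0 <= 1 + t - 4 * t ^ 2 + t ^ 3.
Proof.
  intros H1 H2. assert (t <= 7072 / 10000) by nra.
  assert (0 <= (t - 1 / 2) * (7072 / 10000 - t)) by nra.
  repeat split; nra.
Qed.

Section Orbit.

Variable eta : R.
Hypothesis Heta : 0 < eta < PI / 3.

Let s := amod eta.
Let c := c_ eta.

Let cos_gt_half : 1 / 2 < cos eta.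
Proof.
  rewrite <- cos_PI3. assert (HPI := PI_RGT_0). apply cos_decreasing_1; lra.
Qed.

Let sin_pos : 0 < sin eta.
Proof. assert (HPI := PI_RGT_0). apply sin_gt_0; lra. Qed.

Let s_mul_cos : 2 * s * cos eta = 1.
Proof. apply amod_mul_cos. lra. Qed.

Let s_pos : 0 < s.
Proof. apply amod_pos. lra. Qed.

Let s_lt_1 : s < 1.
Proof. nra. Qed.

Let s4_lt_1 : s ^ 4 < 1.
Proof. apply pow_lt_1_compat; [lra | lia]. Qed.

Let c_mul : c * (1 - s ^ 4) = 1.
Proof. unfold c, c_. rewrite Cmod_a by lra. fold s. field. lra. Qed.

Let c_pos : 0 < c.
Proof. nra. Qed.

Lemma amod_sin_add_sub (y : R) : s * (sin (y + eta) + sin (y - eta)) = sin y.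
Proof.
  rewrite sin_plus, sin_minus.
  transitivity (sin y * (2 * s * cos eta)); [ring | rewrite s_mul_cos; ring].
Qed.

Lemma Psi_rec (x : R) : s * (Psi eta (x + eta) + Psi eta (x - eta)) = Psi eta x.
Proof.
  unfold Psi. fold s.
  rewrite <- (amod_sin_add_sub x), <- (amod_sin_add_sub (x - eta)).
  replace (x + eta - eta) with x by ring. replace (x - eta + eta) with x by ring.
  ring.
Qed.

Lemma z_pred_polar (j : nat) : (1 <= j)%nat -> z_ eta (j - 1) = polar (c * s ^ j) (INR j * eta).
Proof.
  intros Hj. unfold z_. replace (j - 1 + 1)%nat with j by lia.
  rewrite Cpow_a, RtoC_mult_polar by lra. reflexivity.
Qed.

Lemma z_polar (j : nat) : z_ eta j = polar (c * s ^ j * s) (INR j * eta + eta).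
Proof.
  unfold z_. rewrite Cpow_a, RtoC_mult_polar, plus_INR, pow_add by lra.
  unfold c, s. f_equal; simpl; ring.
Qed.

Lemma w1_polar : w_ eta 1 = Cminus 1 (polar (c * s ^ 3) eta).
Proof.
  unfold w_. rewrite Cmod_a, Cpow_a, RtoC_mult_polar by lra.
  unfold c, s. f_equal; f_equal; simpl; ring.
Qed.

Lemma cross_polar_w1 (r x : R) : cross (polar r x) (w_ eta 1) = r * c * Psi eta x.
Proof.
  rewrite w1_polar, cross_polar_one_sub_polar. unfold Psi. fold s.
  transitivity (r * (c * (1 - s ^ 4)) * sin x - r * c * s ^ 3 * sin (x - eta));
    [rewrite c_mul | ]; ring.
Qed.

Lemma cross_w1_one : cross (w_ eta 1) (RtoC 1) = - (c * s ^ 3 * sin eta).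
Proof. rewrite w1_polar. apply cross_one_sub_polar_one. Qed.

Section Triangles.

Variables r x : R.
Hypothesis r_pos : 0 < r.

Let rsc_pos : 0 < r * s * c.
Proof. apply Rmult_lt_0_compat; [apply Rmult_lt_0_compat |]; assumption. Qed.

Let cross_z_pred_z : cross (polar r x) (polar (r * s) (x + eta)) = - (r * r * s * sin eta).
Proof.
  rewrite cross_polar. replace (x - (x + eta)) with (- eta) by ring. rewrite sin_neg. ring.
Qed.

Let rrs_pos : 0 < r * r * s.
Proof. apply Rmult_lt_0_compat; [apply Rmult_lt_0_compat |]; assumption. Qed.

Lemma z_in_triangle_z_w1 :
  Psi eta x < 0 -> Psi eta (x + eta) <= 0 ->
  Psi eta (x - eta) + r * (1 - s ^ 4) * sin eta <= 0 ->
  in_triangle0 (polar (r * s) (x + eta)) (polar r x) (w_ eta 1).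
Proof.
  intros H1 H2 H3. apply in_triangle0_of_cross; rewrite ?cross_z_pred_z, ?cross_polar_w1.
  - assert (0 < r * c) by nra. nra.
  - nra.
  - nra.
  - rewrite <- (Psi_rec x).
    assert (E : r * c * (s * (Psi eta (x + eta) + Psi eta (x - eta)))
                - (r * s * c * Psi eta (x + eta) + - (r * r * s * sin eta))
              = r * s * c * (Psi eta (x - eta) + r * (1 - s ^ 4) * sin eta))
      by (transitivity (r * s * c * Psi eta (x - eta) + r * r * s * sin eta * (c * (1 - s ^ 4)));
          [rewrite c_mul | ]; ring).
    nra.
Qed.

Lemma z_in_triangle_z_one :
  sin x < 0 -> sin (x + eta) <= 0 -> sin (x - eta) + r * sin eta <= 0 ->
  in_triangle0 (polar (r * s) (x + eta)) (polar r x) (RtoC 1).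
Proof.
  intros H1 H2 H3. apply in_triangle0_of_cross; rewrite ?cross_z_pred_z, ?cross_polar_one.
  - nra.
  - assert (0 < r * s) by nra. nra.
  - nra.
  - rewrite <- (amod_sin_add_sub x).
    assert (0 < r * s) by nra. nra.
Qed.

Lemma z_in_triangle_w1_one :
  sin (x + eta) <= 0 -> 0 <= Psi eta (x + eta) -> 0 <= sin eta + r * s * sin x ->
  in_triangle0 (polar (r * s) (x + eta)) (w_ eta 1) (RtoC 1).
Proof.
  intros H1 H2 H3.
  assert (Hcs : 0 < c * s ^ 3) by (apply Rmult_lt_0_compat; [| apply pow_lt]; assumption).
  apply in_triangle0_of_cross;
    rewrite ?cross_w1_one, ?cross_polar_one, ?(cross_anti (w_ eta 1)), ?cross_polar_w1.
  - nra.
  - assert (0 < r * s) by nra. nra.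
  - nra.
  - assert (E : r * s * sin (x + eta) + - (r * s * c * Psi eta (x + eta))
              = c * s ^ 3 * (r * s * sin x)).
    { unfold Psi. fold s. replace (x + eta - eta) with x by ring.
      transitivity (r * s * sin (x + eta) * (1 - c * (1 - s ^ 4)) + c * s ^ 3 * (r * s * sin x));
        [ring | rewrite c_mul; ring]. }
    nra.
Qed.

End Triangles.

Lemma amod_pow_sin (n : nat) :
  s ^ n * sin (INR (S n) * eta) = sin eta * sin_poly (s ^ 2) (S n).
Proof.
  enough (H : s ^ n * sin (INR (S n) * eta) = sin eta * sin_poly (s ^ 2) (S n) /\
              s ^ S n * sin (INR (S (S n)) * eta) = sin eta * sin_poly (s ^ 2) (S (S n)))
    by apply H.
  induction n as [| n [IH1 IH2]].
  - assert (E := amod_sin_add_sub eta).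
    replace (eta - eta) with 0 in E by ring. rewrite sin_0, Rplus_0_r in E.
    simpl. replace (1 * eta) with eta by ring. replace ((1 + 1) * eta) with (eta + eta) by ring.
    split; [ring | rewrite <- E; ring].
  - split; [exact IH2 |].
    assert (E := amod_sin_add_sub (INR (S (S n)) * eta)).
    replace (INR (S (S n)) * eta + eta) with (INR (S (S (S n))) * eta) in E
      by (rewrite !S_INR; ring).
    replace (INR (S (S n)) * eta - eta) with (INR (S n) * eta) in E by (rewrite !S_INR; ring).
    change (sin_poly (s ^ 2) (S (S (S n))))
      with (sin_poly (s ^ 2) (S (S n)) - s ^ 2 * sin_poly (s ^ 2) (S n)).
    transitivity (s ^ S n * (s * (sin (INR (S (S (S n))) * eta) + sin (INR (S n) * eta)))
                  - s ^ 2 * (s ^ n * sin (INR (S n) * eta))); [simpl; ring |].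
    rewrite E, IH1, IH2. ring.
Qed.

Lemma amod_pow_Psi (n : nat) :
  s ^ S n * Psi eta (INR (S (S n)) * eta)
  = sin eta * ((1 - s ^ 4) * sin_poly (s ^ 2) (S (S n)) - s ^ 4 * sin_poly (s ^ 2) (S n)).
Proof.
  unfold Psi. fold s.
  replace (INR (S (S n)) * eta - eta) with (INR (S n) * eta) by (rewrite (S_INR (S n)); ring).
  transitivity ((1 - s ^ 4) * (s ^ S n * sin (INR (S (S n)) * eta))
                - s ^ 4 * (s ^ n * sin (INR (S n) * eta))); [simpl; ring |].
  rewrite !amod_pow_sin. ring.
Qed.

Lemma amod4_of_Phi4 : Phi 4 eta = 0 -> s ^ 4 = 1 / 2.
Proof.
  intros H. rewrite Phi_Psi in H by lra. fold s in H.
  replace ((INR 4 - 1) * eta) with (INR 3 * eta) in H by (simpl; ring).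
  assert (K : s ^ 2 * (Psi eta (INR 3 * eta) + s ^ 4 * sin eta)
              = sin eta * ((1 - s ^ 2) * (1 - 2 * s ^ 4)))
    by (rewrite Rmult_plus_distr_l, (amod_pow_Psi 1); simpl; ring).
  rewrite H, Rmult_0_r in K.
  assert (s ^ 2 < 1) by nra.
  destruct (Rmult_integral _ _ (eq_sym K)) as [K1 | K1]; [lra |].
  destruct (Rmult_integral _ _ K1); lra.
Qed.

Section IndexFive.

Hypothesis quarter_le : PI / 4 <= eta.
Hypothesis s4_lt_half : s ^ 4 < 1 / 2.

Let s_sq_ge : 1 / 2 <= s ^ 2.
Proof. apply amod_sq_ge_half. lra. Qed.

Let signs := z5_polynomial_signs (s ^ 2) s_sq_ge
               ltac:(replace ((s ^ 2) ^ 2) with (s ^ 4) by ring; exact s4_lt_half).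

Let r_pos : 0 < c * s ^ 5.
Proof. apply Rmult_lt_0_compat; [| apply pow_lt]; lra. Qed.

Lemma z5_in_triangle_z_w1 : Psi eta (INR 5 * eta + eta) <= 0 ->
  in_triangle0 (polar (c * s ^ 5 * s) (INR 5 * eta + eta)) (polar (c * s ^ 5) (INR 5 * eta))
    (w_ eta 1).
Proof.
  intros H6. destruct signs as (P1 & P2 & _ & _).
  apply z_in_triangle_z_w1; [exact r_pos | | exact H6 |].
  - assert (E : s ^ 4 * Psi eta (INR 5 * eta)
                = sin eta * (1 - 3 * s ^ 2 - (s ^ 2) ^ 2 + 5 * (s ^ 2) ^ 3 - (s ^ 2) ^ 4))
      by (rewrite (amod_pow_Psi 3); simpl; ring).
    assert (0 < s ^ 4) by (apply pow_lt; lra). nra.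
  - replace (INR 5 * eta - eta) with (INR 4 * eta) by (simpl; ring).
    replace (c * s ^ 5 * (1 - s ^ 4)) with (s ^ 5 * (c * (1 - s ^ 4))) by ring.
    rewrite c_mul, Rmult_1_r.
    assert (E : s ^ 3 * (Psi eta (INR 4 * eta) + s ^ 5 * sin eta)
                = sin eta * (1 - 2 * s ^ 2 - 2 * (s ^ 2) ^ 2 + 3 * (s ^ 2) ^ 3 + (s ^ 2) ^ 4))
      by (rewrite Rmult_plus_distr_l, (amod_pow_Psi 2); simpl; ring).
    assert (0 < s ^ 3) by (apply pow_lt; lra). nra.
Qed.

Lemma z5_in_triangle_w1_one : 0 <= Psi eta (INR 5 * eta + eta) ->
  in_triangle0 (polar (c * s ^ 5 * s) (INR 5 * eta + eta)) (w_ eta 1) (RtoC 1).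
Proof.
  intros H6. destruct signs as (_ & _ & P3 & P4).
  apply z_in_triangle_w1_one; [exact r_pos | | exact H6 |].
  - replace (INR 5 * eta + eta) with (INR 6 * eta) by (simpl; ring).
    assert (E : s ^ 5 * sin (INR 6 * eta) = sin eta * (1 - 4 * s ^ 2 + 3 * (s ^ 2) ^ 2))
      by (rewrite (amod_pow_sin 5); simpl; ring).
    assert (0 < s ^ 5) by (apply pow_lt; lra). nra.
  - assert (E : (1 - s ^ 4) * (sin eta + c * s ^ 5 * s * sin (INR 5 * eta))
                = sin eta * (1 + s ^ 2 - 4 * (s ^ 2) ^ 2 + (s ^ 2) ^ 3)).
    { transitivity ((1 - s ^ 4) * sin eta
                      + c * (1 - s ^ 4) * s ^ 2 * (s ^ 4 * sin (INR 5 * eta)));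
        [ring | rewrite c_mul, (amod_pow_sin 4); simpl; ring]. }
    nra.
Qed.

Lemma z5_in_hull : z_in_hull eta 5.
Proof.
  unfold z_in_hull. rewrite z_polar, z_pred_polar by lia.
  apply in_co4_of_triangle0.
  destruct (Rle_dec (Psi eta (INR 5 * eta + eta)) 0).
  - left. apply z5_in_triangle_z_w1. assumption.
  - right; right. apply z5_in_triangle_w1_one. lra.
Qed.

End IndexFive.

Section Quarter.

Hypothesis quarter : eta <= PI / 4.

Let s_sq_le : s ^ 2 <= 1 / 2.
Proof. apply amod_sq_le_half. lra. Qed.

Let s5_le : s ^ 5 <= 1 - s ^ 2 - s ^ 4 /\ s ^ 5 <= s ^ 3.
Proof.
  assert (s ^ 4 <= 1 / 4) by (replace (s ^ 4) with ((s ^ 2) ^ 2) by ring; nra).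
  assert (s <= 3 / 4) by nra.
  assert (0 < s ^ 3) by (apply pow_lt; lra).
  replace (s ^ 5) with (s ^ 4 * s) by ring. split; nra.
Qed.

Lemma Psi_le (x : R) : PI <= x <= 2 * PI - eta -> Psi eta x <= - (s ^ 5 * sin eta).
Proof.
  intros Hx. assert (HPI := PI_RGT_0). destruct s5_le as [N1 N2].
  assert (P5 : 0 < s ^ 5) by (apply pow_lt; lra).
  set (al := x - PI).
  assert (Ex : x = al + PI) by (unfold al; ring).
  assert (Exe : x - eta = (al - eta) + PI) by (unfold al; ring).
  unfold Psi. fold s. rewrite Exe, Ex, !neg_sin.
  assert (S0 : 0 <= sin al) by (apply sin_ge_0; unfold al; lra).
  destruct (Rle_dec al eta) as [Hle | Hgt].
  - assert (S1 := sin_le_add_sin_sub al eta ltac:(unfold al; lra) ltac:(lra)).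
    assert (S2 : 0 <= sin (eta - al)) by (apply sin_ge_0; unfold al; lra).
    replace (al - eta) with (- (eta - al)) by ring. rewrite sin_neg.
    nra.
  - assert (S1 : sin eta <= sin al) by (apply sin_ge_sin_mid; unfold al; lra).
    assert (S2 : 0 <= sin (al + eta)) by (apply sin_ge_0; unfold al; lra).
    assert (E := amod_sin_add_sub al).
    assert (0 < s ^ 2) by nra.
    assert (s ^ 3 * sin (al - eta) = s ^ 2 * sin al - s ^ 3 * sin (al + eta))
      by (rewrite <- E; ring).
    nra.
Qed.

Let s_pow_le_5 (j : nat) : (5 <= j)%nat -> s ^ j <= s ^ 5.
Proof. intros Hj. apply pow_le_pow_of_le_1; [lra | exact Hj]. Qed.

Lemma Phi_nonpos (j : nat) : (5 <= j)%nat ->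
  PI <= (INR j - 1) * eta -> INR j * eta <= 2 * PI -> Phi j eta <= 0.
Proof.
  intros Hj H1 H2. rewrite Phi_Psi by lra. fold s.
  assert (Psi eta ((INR j - 1) * eta) <= - (s ^ 5 * sin eta)) by (apply Psi_le; lra).
  assert (s ^ j <= s ^ 5) by (apply s_pow_le_5, Hj).
  nra.
Qed.

Lemma z_in_hull_of_Phi (j : nat) : (1 <= j)%nat ->
  PI <= INR j * eta -> (INR j + 2) * eta <= 2 * PI -> Phi j eta <= 0 -> z_in_hull eta j.
Proof.
  intros Hj H1 H2 HPhi. assert (HPI := PI_RGT_0).
  assert (Hr : 0 < c * s ^ j) by (apply Rmult_lt_0_compat; [| apply pow_lt]; lra).
  assert (P5 : 0 < s ^ 5) by (apply pow_lt; lra).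
  unfold z_in_hull. rewrite z_polar, z_pred_polar by exact Hj.
  apply in_co4_of_triangle0; left. apply z_in_triangle_z_w1; [exact Hr | | |].
  - assert (Psi eta (INR j * eta) <= - (s ^ 5 * sin eta)) by (apply Psi_le; lra). nra.
  - assert (Psi eta (INR j * eta + eta) <= - (s ^ 5 * sin eta)) by (apply Psi_le; lra). nra.
  - rewrite Phi_Psi in HPhi by lra. fold s in HPhi.
    replace (INR j * eta - eta) with ((INR j - 1) * eta) by ring.
    replace (c * s ^ j * (1 - s ^ 4)) with (s ^ j * (c * (1 - s ^ 4))) by ring.
    rewrite c_mul, Rmult_1_r.
    exact HPhi.
Qed.

Lemma z_in_hull_far (j : nat) : (5 <= j)%nat -> PI < INR j * eta ->
  (INR j + 1) * eta <= 2 * PI -> PI + eta <= (INR j - 1) * eta -> z_in_hull eta j.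
Proof.
  intros Hj H1 H2 H3. assert (HPI := PI_RGT_0).
  assert (Hr : 0 < c * s ^ j) by (apply Rmult_lt_0_compat; [| apply pow_lt]; lra).
  unfold z_in_hull. rewrite z_polar, z_pred_polar by lia.
  apply in_co4_of_triangle0; right; left. apply z_in_triangle_z_one; [exact Hr | | |].
  - apply sin_lt_0; lra.
  - apply sin_le_0; lra.
  - assert (sin (INR j * eta - eta) <= - sin eta) by (apply sin_le_neg_sin; lra).
    assert (c * s ^ j <= 1).
    { assert (s ^ j <= s ^ 5) by (apply s_pow_le_5, Hj).
      destruct s5_le as [N1 _].
      assert (0 <= s ^ 2) by nra. nra. }
    nra.
Qed.

End Quarter.

End Orbit.

Definition dPhi_succ (k : nat) (t : R) : R :=
  - 8 * amod t ^ 5 * sin t * sin (INR k * t) + INR k * (1 - amod t ^ 4) * cos (INR k * t)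
  - 6 * amod t ^ 4 * sin t * sin (INR k * t - t) - (INR k - 1) * amod t ^ 3 * cos (INR k * t - t)
  + 2 * INR (k + 1) * amod t ^ (k + 2) * sin t ^ 2 + amod t ^ (k + 1) * cos t.

Lemma Phi_succ_derive (k : nat) (t : R) : 0 < cos t ->
  is_derive (fun u => Psi u (INR k * u) + amod u ^ (k + 1) * sin u) t (dPhi_succ k t).
Proof.
  intros H. unfold Psi, amod. auto_derive.
  - repeat split; apply Rgt_not_eq; lra.
  - unfold dPhi_succ, amod. replace (Init.Nat.pred (k + 1)) with k by lia.
    rewrite !pow_add. replace (INR k * t + - t) with (INR k * t - t) by ring.
    field. lra.
Qed.

Lemma pi_div_interval (k : nat) (t : R) : (4 <= k)%nat ->
  PI / (INR k + 1) <= t <= PI / INR k ->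
  INR k * t <= PI <= (INR k + 1) * t /\ 0 < t <= PI / 4.
Proof.
  intros Hk [H1 H2]. assert (HPI := PI_RGT_0).
  assert (HK : 4 <= INR k) by (apply le_INR in Hk; simpl in Hk; lra).
  apply Rle_div_l in H1; [| lra]. apply Rle_div_r in H2; [| lra].
  split; [split |]; nra.
Qed.

Lemma amod_pow_bounds (k : nat) (t : R) : (4 <= k)%nat -> 0 <= t <= PI / 4 ->
  39 / 100 <= 1 - amod t ^ 4 - amod t ^ 3 /\
  amod t ^ (k + 1) <= 3 / 16 /\ amod t ^ (k + 2) <= 1 / 8.
Proof.
  intros Hk Ht. assert (HPI := PI_RGT_0).
  assert (Hs0 : 0 < amod t) by (apply amod_pos, cos_gt_0; lra).
  assert (Hs2 := amod_sq_le_half t Ht).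
  set (s := amod t) in *.
  assert (Hs1 : s <= 7072 / 10000) by nra.
  assert (Hs4 : s ^ 4 <= 1 / 4) by (replace (s ^ 4) with ((s ^ 2) ^ 2) by ring; nra).
  assert (s ^ (k + 1) <= s ^ 5) by (apply pow_le_pow_of_le_1; [lra | lia]).
  assert (s ^ (k + 2) <= s ^ 6) by (apply pow_le_pow_of_le_1; [lra | lia]).
  assert (0 <= s ^ 2) by nra. assert (0 <= s ^ 4) by nra.
  replace (s ^ 3) with (s ^ 2 * s) by ring.
  replace (s ^ 5) with (s ^ 4 * s) in * by ring.
  replace (s ^ 6) with ((s ^ 2) ^ 3) in * by ring.
  split; [| split]; nra.
Qed.

Lemma dPhi_succ_neg (k : nat) (t : R) : (4 <= k)%nat ->
  PI / (INR k + 1) <= t <= PI / INR k -> dPhi_succ k t < 0.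
Proof.
  intros Hk Ht. assert (HPI := PI_RGT_0).
  destruct (pi_div_interval k t Hk Ht) as [[Kt1 Kt2] Ht4].
  destruct (amod_pow_bounds k t Hk ltac:(lra)) as (A & Hsk1 & Hsk2).
  assert (HK : 4 <= INR k) by (apply le_INR in Hk; simpl in Hk; lra).
  assert (Hs0 : 0 < amod t) by (apply amod_pos, cos_gt_0; lra).
  assert (Hsin2 : sin t ^ 2 <= 1 / 2)
    by (destruct (cos_quarter_bounds t) as [_ C]; [lra |];
        assert (P := sin2_cos2 t); unfold Rsqr in P; nra).
  set (K := INR k) in *. set (s := amod t) in *.
  (* [K t = PI - d] with [0 <= d <= t], so all sines below are nonnegative. *)
  set (d := PI - K * t).
  unfold dPhi_succ. fold K s.
  replace (K * t - t) with (PI - (d + t)) by (unfold d; ring).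
  replace (K * t) with (PI - d) by (unfold d; ring).
  rewrite !Rtrigo_facts.cos_pi_minus, !sin_PI_x.
  assert (0 <= sin d) by (apply sin_ge_0; unfold d; lra).
  assert (0 <= sin (d + t)) by (apply sin_ge_0; unfold d; lra).
  assert (0 < sin t) by (apply sin_gt_0; lra).
  assert (C1 : cos (d + t) <= cos d) by (apply cos_decr_1; unfold d; lra).
  assert (C2 : 0 <= cos (d + t)) by (apply cos_ge_0; unfold d; lra).
  assert (C3 : 7 / 10 <= cos d) by (apply cos_quarter_bounds; unfold d; lra).
  assert (Q1 : 0 <= s ^ 5 * sin t * sin d)
    by (apply Rmult_le_pos; [apply Rmult_le_pos; [apply pow_le |] |]; lra).
  assert (Q2 : 0 <= s ^ 4 * sin t * sin (d + t))
    by (apply Rmult_le_pos; [apply Rmult_le_pos; [apply pow_le |] |]; lra).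
  assert (Q3 : (K - 1) * s ^ 3 * cos (d + t) <= K * s ^ 3 * cos d).
  { assert (0 < s ^ 3) by (apply pow_lt; lra).
    assert (0 <= s ^ 3 * cos (d + t) <= s ^ 3 * cos d) by (split; nra). nra. }
  assert (Q4 : K * (39 / 100 * (7 / 10)) <= K * ((1 - s ^ 4 - s ^ 3) * cos d))
    by (apply Rmult_le_compat_l; nra).
  assert (Q5 : 2 * INR (k + 1) * s ^ (k + 2) * sin t ^ 2 <= (K + 1) / 8).
  { rewrite plus_INR. simpl INR. fold K.
    assert (0 <= s ^ (k + 2)) by (apply pow_le; lra).
    assert (s ^ (k + 2) * sin t ^ 2 <= 1 / 16) by nra. nra. }
  assert (Q6 : s ^ (k + 1) * cos t <= 3 / 16).
  { assert (0 <= s ^ (k + 1)) by (apply pow_le; lra). assert (cos t <= 1) by apply COS_bound. nra. }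
  nra.
Qed.

Lemma Phi_succ_antitone (k : nat) (e t : R) : (4 <= k)%nat ->
  PI / (INR k + 1) <= e -> e <= t -> t <= PI / INR k -> Phi (k + 1) t <= Phi (k + 1) e.
Proof.
  intros Hk He Het Ht.
  assert (Hcos : forall u, PI / (INR k + 1) <= u <= PI / INR k -> 0 < cos u)
    by (intros u Hu; destruct (pi_div_interval k u Hk Hu) as [_ ?];
        assert (HPI := PI_RGT_0); apply cos_gt_0; lra).
  rewrite !Phi_Psi by (apply Hcos; lra).
  rewrite plus_INR. replace (INR k + INR 1 - 1) with (INR k) by (simpl; ring).
  destruct (Req_dec e t) as [<- | Hne]; [lra |].
  set (f := fun u => Psi u (INR k * u) + amod u ^ (k + 1) * sin u).
  enough (- f e < - f t) by (unfold f in *; lra).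
  apply (incr_function_le (fun u => - f u) (PI / (INR k + 1)) (PI / INR k)
           (fun u => - dPhi_succ k u)); cbn; try lra.
  - intros u Hu1 Hu2. exact (is_derive_opp f u _ (Phi_succ_derive k u (Hcos u ltac:(lra)))).
  - intros u Hu1 Hu2. assert (dPhi_succ k u < 0) by (apply dPhi_succ_neg; auto). lra.
Qed.

Ltac nat_to_R H :=
  first [apply le_INR in H | apply (f_equal INR) in H];
  rewrite ?plus_INR, ?mult_INR in H; simpl INR in H.

Lemma z_in_hull_C1_k4 (eta4 eta : R) : PI / 4 < eta4 < PI / 3 -> Phi 4 eta4 = 0 ->
  PI / 4 <= eta < eta4 -> z_in_hull eta 5.
Proof.
  intros H4 HPhi He. assert (HPI := PI_RGT_0).
  apply z5_in_hull; [lra | lra |].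
  rewrite <- (amod4_of_Phi4 eta4 ltac:(lra) HPhi).
  assert (amod eta < amod eta4) by (apply amod_lt; lra).
  assert (0 < amod eta) by (apply amod_pos, cos_gt_0; lra).
  assert (amod eta ^ 2 < amod eta4 ^ 2) by nra.
  replace (amod eta ^ 4) with ((amod eta ^ 2) ^ 2) by ring.
  replace (amod eta4 ^ 4) with ((amod eta4 ^ 2) ^ 2) by ring.
  assert (0 < amod eta ^ 2) by nra. nra.
Qed.

Lemma z_in_hull_C1 (k j : nat) (eta : R) : (5 <= k)%nat ->
  PI / INR k <= eta < PI / (INR k - 1) -> (k + 1 <= j <= 2 * k - 3)%nat -> z_in_hull eta j.
Proof.
  intros Hk [H1 H2] Hj. assert (HPI := PI_RGT_0).
  assert (HK : 5 <= INR k) by (nat_to_R Hk; lra).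
  apply Rle_div_l in H1; [| lra]. apply Rlt_div_r in H2; [| lra].
  assert (Heta : 0 < eta < PI / 3) by nra.
  assert (Hq : eta <= PI / 4) by nra.
  assert (HJ1 : (k + 1 <= j)%nat) by lia. nat_to_R HJ1.
  destruct (Compare_dec.le_lt_dec j (2 * k - 4)) as [Hj4 | Hj4].
  - assert (HJ2 : (j + 4 <= 2 * k)%nat) by lia. nat_to_R HJ2.
    apply (z_in_hull_of_Phi eta Heta Hq); [lia | nra | nra |].
    apply (Phi_nonpos eta Heta Hq); [lia | nra | nra].
  - assert (HJ2 : (j + 3 = 2 * k)%nat) by lia. nat_to_R HJ2.
    apply (z_in_hull_far eta Heta Hq); [lia | nra | nra | nra].
Qed.

Lemma z_in_hull_C2 (k j : nat) (eta' eta : R) : (4 <= k)%nat ->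
  PI / (INR k + 1) < eta' -> Phi (k + 1) eta' = 0 -> eta' <= eta < PI / INR k ->
  (k + 1 <= j <= 2 * k - 1)%nat -> z_in_hull eta j.
Proof.
  intros Hk H1 HPhi [H2 H3] Hj. assert (HPI := PI_RGT_0).
  assert (HK : 4 <= INR k) by (nat_to_R Hk; lra).
  assert (H1' := H1). apply Rlt_div_l in H1'; [| lra].
  assert (H3' := H3). apply Rlt_div_r in H3'; [| lra].
  assert (Heta : 0 < eta < PI / 3) by nra.
  assert (Hq : eta <= PI / 4) by nra.
  destruct (Nat.eq_dec j (k + 1)) as [-> | Hj1].
  - apply (z_in_hull_of_Phi eta Heta Hq); rewrite ?plus_INR; simpl INR; [lia | nra | nra |].
    rewrite <- HPhi. apply Phi_succ_antitone; [exact Hk | lra | lra | lra].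
  - assert (HJ1 : (k + 2 <= j)%nat) by lia. nat_to_R HJ1.
    destruct (Compare_dec.le_lt_dec j (2 * k - 2)) as [Hj2 | Hj2].
    + assert (HJ2 : (j + 2 <= 2 * k)%nat) by lia. nat_to_R HJ2.
      apply (z_in_hull_of_Phi eta Heta Hq); [lia | nra | nra |].
      apply (Phi_nonpos eta Heta Hq); [lia | nra | nra].
    + assert (HJ2 : (j + 1 = 2 * k)%nat) by lia. nat_to_R HJ2.
        apply (z_in_hull_far eta Heta Hq); [lia | nra | nra | nra].
Qed.

Theorem lemma5p3 (k : nat) (Hk : (4 <= k)%nat)
  (eta_k eta_k1 : R)
  (Hek : PI / INR k < eta_k < PI / (INR k - 1) /\ Phi k eta_k = 0)
  (Hek1 : PI / (INR k + 1) < eta_k1 < PI / INR k /\ Phi (k + 1) eta_k1 = 0)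
  (eta : R) (Heta : 0 < eta < PI / 3) (j : nat) :
  ((PI / INR k <= eta < eta_k /\ (k + 1 <= j <= 2 * k - 3)%nat) \/
   (eta_k1 <= eta < PI / INR k /\ (k + 1 <= j <= 2 * k - 1)%nat)) ->
  in_co4 (z_ eta j) (RtoC 0) (z_ eta (j - 1)) (w_ eta 1) (RtoC 1) /\
  in_co4 (w_ eta j) (RtoC 1) (w_ eta (j - 1)) (b0_ eta) (a_ eta).
Proof.
  intros Hcase. assert (HPI := PI_RGT_0).
  assert (Hcos : 0 < cos eta) by (apply cos_gt_0; lra).
  enough (Hz : z_in_hull eta j) by (split; [| apply w_in_hull_of_z_in_hull]; assumption).
  destruct Hcase as [[He Hj] | [He Hj]].
  - destruct Hek as [[Hk1 Hk2] HPhi].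
    destruct (Nat.eq_dec k 4) as [-> | Hk5].
    + replace j with 5%nat by lia.
      replace (INR 4) with 4 in * by (simpl; ring). replace (4 - 1) with 3 in Hk2 by ring.
      apply (z_in_hull_C1_k4 eta_k); [lra | exact HPhi | lra].
    + apply (z_in_hull_C1 k); [lia | lra | exact Hj].
  - destruct Hek1 as [[Hk1 _] HPhi].
    apply (z_in_hull_C2 k j eta_k1); [exact Hk | exact Hk1 | exact HPhi | lra | exact Hj].
Qed.
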